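(* Let $G=(V,E)$ be a finite graph and let $W=(w_1,\dots,w_m)$ be a selection sequence of $G$ which has the property $T_1$. Then $|W|=\alpha(G)$, where $\alpha(G)$ denotes the size of a maximum independent set of $G$.
   Context: An independent set of $G$ is a set of vertices no two of which are adjacent; $\alpha(G)$ is the maximum size of an independent set. A selection sequence of $G$ is a finite sequence $W=(w_1,\dots,w_m)$ ($m\le |V|$) of distinct vertices of $V$ such that no vertex of $W$ is adjacent to another vertex of $W$, and every vertex of $V$ is either in $W$ or adjacent to a vertex of $W$. Given a selection sequence, set $G_0=G$ and, for $1\le i\le m$, let $G_i$ be the subgraph of $G$ induced by the vertices that are neither in $\{w_1,\dots,w_i\}$ nor adjacent to any of $w_1,\dots,w_i$ (the remaining graphs). The selection sequence $W$ has the property $T_1$ if for every $1\le i\le m$ the degree of $w_i$ in $G_{i-1}$ is at most $1$. *)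

From mathcomp Require Import all_boot.
Set Implicit Arguments. Unset Strict Implicit. Unset Printing Implicit Defensive.

Definition simple_graph (T : finType) (e : rel T) : Prop :=
  symmetric e /\ irreflexive e.

Definition independent (T : finType) (e : rel T) (S : {set T}) : bool :=
  [forall x in S, forall y in S, ~~ e x y].

Definition alpha (T : finType) (e : rel T) : nat :=
  \max_(S : {set T} | independent e S) #|S|.

Definition remaining (T : finType) (e : rel T) (s : seq T) : {set T} :=
  [set v | (v \notin s) && ~~ has (fun w => e w v) s].

Definition selection_seq (T : finType) (e : rel T) (W : seq T) : Prop :=
  [/\ uniq W,
      {in W &, forall x y, ~~ e x y}
    & forall v : T, (v \in W) || has (fun w => e w v) W].

Definition deg_in (T : finType) (e : rel T) (R : {set T}) (v : T) : nat :=
  #|[set u in R | e v u]|.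

(* property T_1: for every 1 <= i <= m, deg_{G_{i-1}}(w_i) <= 1,
   where G_{i-1} is induced by remaining e (take (i-1) W).  Indexing from 0:
   for i < size W, w = nth W i, G = remaining e (take i W). *)
Definition property_T1 (T : finType) (e : rel T) (W : seq T) : Prop :=
  forall (i : nat) (x0 : T), i < size W ->
    deg_in e (remaining e (take i W)) (nth x0 W i) <= 1.

(* Every independent set S loses at most one vertex per selection step: the
   vertices removed at step i form the closed neighbourhood of w_i in G_(i-1),
   which by T_1 is w_i plus at most one neighbour, and an independent set
   cannot contain two adjacent vertices.  Since S meets G_0 = G in all of S
   and G_m is empty, |S| <= m.  Conversely W is itself independent. *)
From mathcomp Require Import all_boot.

Set Implicit Arguments.
Unset Strict Implicit.
Unset Printing Implicit Defensive.

Section Remaining.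

Variables (T : finType) (e : rel T).

Definition closed_nbhd (w : T) : {set T} := w |: [set v | e w v].

Lemma remaining0 : remaining e [::] = [set: T].
Proof. by apply/setP => v; rewrite !inE. Qed.

Lemma remaining_rcons (s : seq T) (w : T) :
  remaining e (rcons s w) = remaining e s :\: closed_nbhd w.
Proof.
apply/setP => v; rewrite !inE mem_rcons has_rcons inE negb_or.
by case: (v == w); case: (e w v); rewrite ?andbF ?andbT.
Qed.

Lemma remaining_dominating (W : seq T) :
  (forall v, (v \in W) || has (fun w => e w v) W) -> remaining e W = set0.
Proof. by move=> domW; apply/setP => v; rewrite !inE -negb_or domW. Qed.

Lemma independent_mem_seq (W : seq T) :
  {in W &, forall x y, ~~ e x y} -> independent e [set x in W].
Proof.
move=> indW; apply/forallP => x; apply/implyP; rewrite inE => xW.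
by apply/forallP => y; apply/implyP; rewrite inE => yW; exact: indW.
Qed.

Lemma independent_nonadjacent (S : {set T}) (x y : T) :
  independent e S -> x \in S -> y \in S -> ~~ e x y.
Proof. by move=> /forallP/(_ x)/implyP indS /indS/forallP/(_ y)/implyP. Qed.

Lemma independent_meet_closed_nbhd (S R : {set T}) (w : T) :
  independent e S -> deg_in e R w <= 1 -> #|S :&: R :&: closed_nbhd w| <= 1.
Proof.
move=> indS degw; apply/card_le1_eqP => x y.
rewrite !inE => /andP[/andP[xS xR] xw] /andP[/andP[yS yR] yw].
case/orP: xw => [/eqP xw | ewx]; case/orP: yw => [/eqP yw | ewy].
- by rewrite xw yw.
- by move: (independent_nonadjacent indS xS yS); rewrite xw ewy.
- by move: (independent_nonadjacent indS yS xS); rewrite yw ewx.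
- by move/card_le1_eqP: degw; apply; rewrite inE ?xR ?yR.
Qed.

Lemma card_independent_remaining_rcons (S : {set T}) (s : seq T) (w : T) :
  independent e S -> deg_in e (remaining e s) w <= 1 ->
  #|S :&: remaining e s| <= #|S :&: remaining e (rcons s w)| + 1.
Proof.
move=> indS degw; rewrite remaining_rcons setIDA.
rewrite -(cardsID (closed_nbhd w) (S :&: remaining e s)) addnC leq_add2l.
exact: independent_meet_closed_nbhd.
Qed.

Lemma card_independent_le_size (S : {set T}) (W : seq T) :
  independent e S -> (forall v, (v \in W) || has (fun w => e w v) W) ->
  property_T1 e W -> #|S| <= size W.
Proof.
move=> indS domW hT1.
have lossy k : k <= size W -> #|S| <= #|S :&: remaining e (take k W)| + k.
  elim: k => [|k IH] lt_k; first by rewrite take0 remaining0 setIT addn0.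
  have x0 : T by case: W {domW hT1 IH} lt_k => [|x].
  apply: leq_trans (IH (ltnW lt_k)) _.
  rewrite (take_nth x0 lt_k) addnS -addn1 addnAC leq_add2r.
  exact: card_independent_remaining_rcons (hT1 k x0 lt_k).
by have := lossy _ (leqnn _); rewrite take_size remaining_dominating // setI0 cards0.
Qed.

End Remaining.

Theorem lemma1 (T : finType) (e : rel T) (W : seq T) :
  simple_graph e -> selection_seq e W -> property_T1 e W ->
  size W = alpha e.
Proof.
move=> _ [uW indW domW] hT1; apply/eqP; rewrite eqn_leq; apply/andP; split.
- have := leq_bigmax_cond (F := fun S : {set T} => #|S|) _ (independent_mem_seq indW).
  by rewrite cardsE (card_uniqP uW).
- by apply/bigmax_leqP => S indS; exact: card_independent_le_size indS domW hT1.
Qed.
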